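(* Let $\{x_k\}$, $\{d_k\}$ be generated by Algorithm 1 or Algorithm 2 (described in the context) under the Standing Assumption and Matrix Assumption of the context, and suppose the algorithm does not terminate finitely. Write $d_k=u_k+v_k$ with $u_k\in\mathrm{Null}(J_k)$, $v_k\in\mathrm{Range}(J_k^T)$. Then there exists $\kappa_{uv}>0$ such that for any $k\in\mathbb{N}$, if $\|u_k\|_2^2\ge\kappa_{uv}\|v_k\|_2^2$, then $\tfrac12d_k^TH_kd_k\ge\tfrac14\zeta\|u_k\|_2^2$.
   Context: Notation: $g_k=\nabla f(x_k)$, $c_k=c(x_k)$, $J_k=\nabla c(x_k)^T$; $\phi(x,\tau)=\tau f(x)+\|c(x)\|_1$; $\Delta q(x,\tau,g,H,d)=-\tau(g^Td+\frac12\max\{d^THd,0\})+\|c(x)\|_1$. Matrix Assumption: symmetric $H_k$ with $\|H_k\|_2\le\kappa_H$ and $u^TH_ku\ge\zeta\|u\|_2^2$ whenever $J_ku=0$ (constants $\kappa_H,\zeta>0$). Common iteration: $(d_k,y_k)$ solves $H_kd_k+J_k^Ty_k=-g_k$, $J_kd_k=-c_k$; stop if $g_k+J_k^Ty_k=0$ and $c_k=0$. $\tau_k^{trial}=\infty$ if $g_k^Td_k+\max\{d_k^TH_kd_k,0\}\le0$, else $\frac{(1-\sigma)\|c_k\|_1}{g_k^Td_k+\max\{d_k^TH_kd_k,0\}}$; $\tau_k=\tau_{k-1}$ if $\tau_{k-1}\le\tau_k^{trial}$, else $(1-\epsilon)\tau_k^{trial}$; $x_{k+1}=x_k+\alpha_kd_k$.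 (SD) for trial $\alpha$: $\phi(x_k+\alpha d_k,\tau_k)\le\phi(x_k,\tau_k)-\eta\alpha\Delta q(x_k,\tau_k,g_k,H_k,d_k)$. Algorithm 1 (inputs $\tau_{-1}>0$, $\epsilon,\sigma,\eta\in(0,1)$, $\rho>1$, $L_{-1}>0$, $\gamma_{-1,i}>0$): choose $L_{k,0}\in(0,L_{k-1}]$, $\gamma_{k,i,0}\in(0,\gamma_{k-1,i}]$; for $j=0,1,\dots$ with $\Lambda_{k,j}=\tau_kL_{k,j}+\sum_i\gamma_{k,i,j}$: $\widehat\alpha_{k,j}=\frac{2(1-\eta)\Delta q(x_k,\tau_k,g_k,H_k,d_k)}{\Lambda_{k,j}\|d_k\|_2^2}$, $\widetilde\alpha_{k,j}=\widehat\alpha_{k,j}-\frac{4\|c_k\|_1}{\Lambda_{k,j}\|d_k\|_2^2}$; $\alpha_{k,j}=\widehat\alpha_{k,j}$ if $\widehat\alpha_{k,j}<1$, $1$ if $\widetilde\alpha_{k,j}\le1\le\widehat\alpha_{k,j}$, $\widetilde\alpha_{k,j}$ if $\widetilde\alpha_{k,j}>1$; accept ($\alpha_k=\alpha_{k,j}$, $L_k=L_{k,j}$, $\gamma_{k,i}=\gamma_{k,i,j}$) if (SD) holds or if both $f(x_k+\alpha_{k,j}d_k)\le f(x_k)+\alpha_{k,j}g_k^Td_k+\frac12L_{k,j}\alpha_{k,j}^2\|d_k\|_2^2$ (LF) and $|c_i(x_k+\alpha_{k,j}d_k)|\le|c_i(x_k)+\alpha_{k,j}\nabla c_i(x_k)^Td_k|+\frac12\gamma_{k,i,j}\alpha_{k,j}^2\|d_k\|_2^2$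 (LC$_i$) for all $i$; otherwise multiply $L_{k,j}$ by $\rho$ if (LF) fails and $\gamma_{k,i,j}$ by $\rho$ if (LC$_i$) fails. Algorithm 2 (inputs $\tau_{-1}>0$, $\epsilon,\sigma,\eta,\nu\in(0,1)$, $\alpha>0$): $\alpha_k=\nu^j\alpha$ for the smallest $j\ge0$ such that (SD) holds. Standing Assumption: an open convex set $\mathcal X$ contains all iterates and trial points $x_k+\alpha_{k,j}d_k$; $f$ is $C^1$, bounded below on $\mathcal X$, $\nabla f$ bounded and $L$-Lipschitz on $\mathcal X$; $c$, $\nabla c^T$ bounded on $\mathcal X$; $\nabla c_i$ is $\gamma_i$-Lipschitz on $\mathcal X$; singular values of $\nabla c(x)^T$ bounded away from zero uniformly over $\mathcal X$. *)

From HB Require Import structures.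
From mathcomp Require Import all_boot all_order all_algebra.
From mathcomp Require Import all_classical all_reals all_analysis.
Set Implicit Arguments. Unset Strict Implicit. Unset Printing Implicit Defensive.
Import Order.TTheory GRing.Theory Num.Theory.
Import numFieldNormedType.Exports.
Local Open Scope classical_set_scope.
Local Open Scope ring_scope.

Section Defs.
Variables (R : realType) (n m : nat).

Definition dotv (u v : 'cV[R]_n) : R := \sum_(i < n) u i 0 * v i 0.
Definition norm2 (u : 'cV[R]_n) : R := Num.sqrt (dotv u u).
Definition norm2m (w : 'cV[R]_m) : R := Num.sqrt (\sum_(i < m) w i 0 ^+ 2).
Definition norm1 (w : 'cV[R]_m) : R := \sum_(i < m) `|w i 0|.

Definition merit (f : 'cV[R]_n -> R) (c : 'cV[R]_n -> 'cV[R]_m) (x : 'cV[R]_n)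
  (tau : R) : R := tau * f x + norm1 (c x).

(* Delta q(x,tau,g,H,d); cx stands for c(x) *)
Definition dq (cx : 'cV[R]_m) (tau : R) (g : 'cV[R]_n) (H : 'M[R]_n)
  (d : 'cV[R]_n) : R :=
  - tau * (dotv g d + 2^-1 * Num.max (dotv d (H *m d)) 0) + norm1 cx.

(* merit parameter update: tau_k from tau_{k-1}; tau_trial = +oo when the
   denominator is <= 0 *)
Definition tau_update (sigma eps taup : R) (cx : 'cV[R]_m) (g : 'cV[R]_n)
  (H : 'M[R]_n) (d : 'cV[R]_n) : R :=
  let den := dotv g d + Num.max (dotv d (H *m d)) 0 in
  if den <= 0 then taup
  else let tr := (1 - sigma) * norm1 cx / den in
       if taup <= tr then taup else (1 - eps) * tr.

Definition SD (f : 'cV[R]_n -> R) (c : 'cV[R]_n -> 'cV[R]_m) (eta tau : R)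
  (x : 'cV[R]_n) (g : 'cV[R]_n) (H : 'M[R]_n) (d : 'cV[R]_n) (a : R) : Prop :=
  merit f c (x + a *: d) tau <= merit f c x tau - eta * a * dq (c x) tau g H d.

(* the common iteration: (d_k,y_k) solves the linear system, tau_k is updated,
   x_{k+1} = x_k + alpha_k d_k; tau_{-1} = taum1 *)
Definition common_iteration (f : 'cV[R]_n -> R) (c : 'cV[R]_n -> 'cV[R]_m)
  (g : 'cV[R]_n -> 'cV[R]_n) (J : 'cV[R]_n -> 'M[R]_(m, n))
  (x d : nat -> 'cV[R]_n) (y : nat -> 'cV[R]_m) (H : nat -> 'M[R]_n)
  (tau alpha : nat -> R) (taum1 sigma eps : R) : Prop :=
  forall k,
    [/\ H k *m d k + (J (x k))^T *m y k = - g (x k),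
        J (x k) *m d k = - c (x k),
        tau k = tau_update sigma eps (if k is k'.+1 then tau k' else taum1)
                  (c (x k)) (g (x k)) (H k) (d k)
      & x k.+1 = x k + alpha k *: d k].

Definition no_finite_termination (c : 'cV[R]_n -> 'cV[R]_m)
  (g : 'cV[R]_n -> 'cV[R]_n) (J : 'cV[R]_n -> 'M[R]_(m, n))
  (x : nat -> 'cV[R]_n) (y : nat -> 'cV[R]_m) : Prop :=
  forall k, ~ (g (x k) + (J (x k))^T *m y k = 0 /\ c (x k) = 0).

Definition alpha_trial (eta Lam dqv cn dd : R) : R :=
  let ahat := 2 * (1 - eta) * dqv / (Lam * dd) in
  let atil := ahat - 4 * cn / (Lam * dd) in
  if ahat < 1 then ahat else if atil <= 1 then 1 else atil.

Definition LF (f : 'cV[R]_n -> R) (x g d : 'cV[R]_n) (L a : R) : Prop :=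
  f (x + a *: d) <= f x + a * dotv g d + 2^-1 * L * a ^+ 2 * dotv d d.
Definition LC (c : 'cV[R]_n -> 'cV[R]_m) (Jx : 'M[R]_(m, n)) (x d : 'cV[R]_n)
  (i : 'I_m) (gam a : R) : Prop :=
  `|c (x + a *: d) i 0| <= `|c x i 0 + a * (Jx *m d) i 0|
                            + 2^-1 * gam * a ^+ 2 * dotv d d.

Definition generated_by_alg1 (X : set 'cV[R]_n) (f : 'cV[R]_n -> R)
  (c : 'cV[R]_n -> 'cV[R]_m) (g : 'cV[R]_n -> 'cV[R]_n)
  (J : 'cV[R]_n -> 'M[R]_(m, n)) (x d : nat -> 'cV[R]_n) (y : nat -> 'cV[R]_m)
  (H : nat -> 'M[R]_n) (tau alpha : nat -> R) : Prop :=
  exists (taum1 eps sigma eta rho Lm1 : R) (gm1 : 'I_m -> R)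
         (Lkj : nat -> nat -> R) (gkj : nat -> nat -> 'I_m -> R) (jk : nat -> nat),
  [/\ 0 < taum1, 0 < eps < 1, 0 < sigma < 1, 0 < eta < 1 & 1 < rho] /\
  0 < Lm1 /\ (forall i, 0 < gm1 i) /\
  common_iteration f c g J x d y H tau alpha taum1 sigma eps /\ (
      let Lprev k := if k is k'.+1 then Lkj k' (jk k') else Lm1 in
      let gprev k i := if k is k'.+1 then gkj k' (jk k') i else gm1 i in
      let akj k j := alpha_trial eta (tau k * Lkj k j + \sum_(i < m) gkj k j i)
                       (dq (c (x k)) (tau k) (g (x k)) (H k) (d k))
                       (norm1 (c (x k))) (dotv (d k) (d k)) in
      let LFkj k j := LF f (x k) (g (x k)) (d k) (Lkj k j) (akj k j) in
      let LCkj k j i := LC c (J (x k)) (x k) (d k) i (gkj k j i) (akj k j) in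
      let accept k j := SD f c eta (tau k) (x k) (g (x k)) (H k) (d k) (akj k j)
                        \/ (LFkj k j /\ forall i, LCkj k j i) in
      forall k,
      [/\ 0 < Lkj k 0 <= Lprev k,
          (forall i, 0 < gkj k 0 i <= gprev k i),
          (forall j, (j < jk k)%N ->
             [/\ ~ accept k j,
                 (LFkj k j -> Lkj k j.+1 = Lkj k j),
                 (~ LFkj k j -> Lkj k j.+1 = rho * Lkj k j),
                 (forall i, LCkj k j i -> gkj k j.+1 i = gkj k j i) &
                 (forall i, ~ LCkj k j i -> gkj k j.+1 i = rho * gkj k j i)]) &
          accept k (jk k)] /\
      alpha k = akj k (jk k) /\
      (forall j, (j <= jk k)%N -> X (x k + akj k j *: d k))).

Definition generated_by_alg2 (X : set 'cV[R]_n) (f : 'cV[R]_n -> R)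
  (c : 'cV[R]_n -> 'cV[R]_m) (g : 'cV[R]_n -> 'cV[R]_n)
  (J : 'cV[R]_n -> 'M[R]_(m, n)) (x d : nat -> 'cV[R]_n) (y : nat -> 'cV[R]_m)
  (H : nat -> 'M[R]_n) (tau alpha : nat -> R) : Prop :=
  exists (taum1 eps sigma eta nu alpha0 : R) (jk : nat -> nat),
  [/\ 0 < taum1, 0 < eps < 1, 0 < sigma < 1, 0 < eta < 1 & 0 < nu < 1] /\
  0 < alpha0 /\
  common_iteration f c g J x d y H tau alpha taum1 sigma eps /\ (
      forall k,
      [/\ SD f c eta (tau k) (x k) (g (x k)) (H k) (d k) (nu ^+ jk k * alpha0),
          (forall j, (j < jk k)%N ->
             ~ SD f c eta (tau k) (x k) (g (x k)) (H k) (d k) (nu ^+ j * alpha0)),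
          alpha k = nu ^+ jk k * alpha0 &
          (forall j, (j <= jk k)%N -> X (x k + (nu ^+ j * alpha0) *: d k))]).

Definition convex_set (X : set 'cV[R]_n) : Prop :=
  forall a b t, X a -> X b -> 0 <= t <= 1 -> X (t *: a + (1 - t) *: b).

(* Standing Assumption (g is the gradient of f, J x = grad c(x)^T) *)
Definition standing_assumption (X : set 'cV[R]_n) (f : 'cV[R]_n -> R)
  (c : 'cV[R]_n -> 'cV[R]_m) (g : 'cV[R]_n -> 'cV[R]_n)
  (J : 'cV[R]_n -> 'M[R]_(m, n)) (x : nat -> 'cV[R]_n) : Prop :=
  [/\ open X, convex_set X & (forall k, X (x k))] /\
      (forall z, X z -> differentiable f z /\ forall h, 'd f z h = dotv (g z) h) /\
      {within X, continuous g} /\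
      (forall z, X z -> differentiable c z /\ forall h, 'd c z h = J z *m h) /\
      (exists lb, forall z, X z -> lb <= f z) /\
      (exists B, forall z, X z -> norm2 (g z) <= B) /\
      (exists L, 0 <= L /\ forall z w, X z -> X w ->
          norm2 (g z - g w) <= L * norm2 (z - w)) /\
      (exists B, forall z, X z -> norm2m (c z) <= B) /\
      (exists B, forall z (u : 'cV[R]_n), X z -> norm2m (J z *m u) <= B * norm2 u) /\
      (exists gam : 'I_m -> R, (forall i, 0 <= gam i) /\
         forall i z w, X z -> X w ->
           norm2 ((row i (J z))^T - (row i (J w))^T) <= gam i * norm2 (z - w)) /\
      (* singular values of grad c(x)^T bounded away from zero uniformly *)
      (exists s, 0 < s /\ forall z (w : 'cV[R]_m), X z ->
          s * norm2m w <= norm2 ((J z)^T *m w)).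

Definition matrix_assumption (J : 'cV[R]_n -> 'M[R]_(m, n))
  (x : nat -> 'cV[R]_n) (H : nat -> 'M[R]_n) (kappaH zeta : R) : Prop :=
  [/\ 0 < kappaH, 0 < zeta &
      forall k,
      [/\ (H k)^T = H k,
          (forall u, norm2 (H k *m u) <= kappaH * norm2 u) &
          (forall u, J (x k) *m u = 0 -> zeta * norm2 u ^+ 2 <= dotv u (H k *m u))]].

End Defs.

From HB Require Import structures.
From mathcomp Require Import all_boot all_order all_algebra.
From mathcomp Require Import all_classical all_reals all_analysis.
From mathcomp Require Import ring lra.
Import Order.TTheory GRing.Theory Num.Theory.
Local Open Scope classical_set_scope.
Local Open Scope ring_scope.

(* Expand
   d'Hd = u'Hu + u'Hv + v'Hu + v'Hv.  The first term is at least zeta |u|^2;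
   by Young's inequality and |Hz| <= kappaH |z| each cross term is at least
   -zeta/8 |u|^2 - O(|v|^2), and v'Hv >= -O(|v|^2).  Once |u|^2 dominates a
   large enough multiple of |v|^2, the O(|v|^2) terms are absorbed into
   zeta/4 |u|^2, leaving d'Hd >= zeta/2 |u|^2. *)

Section QuadraticForms.
Context {R : realType} {n : nat}.
Implicit Types (a b z : 'cV[R]_n) (A : 'M[R]_n).

Lemma dotvC a b : dotv a b = dotv b a.
Proof. by apply: eq_bigr => i _; rewrite mulrC. Qed.

Lemma dotvDl a b z : dotv (a + b) z = dotv a z + dotv b z.
Proof. by rewrite /dotv -big_split; apply: eq_bigr => i _; rewrite !mxE mulrDl. Qed.

Lemma dotvDr a b z : dotv z (a + b) = dotv z a + dotv z b.
Proof. by rewrite dotvC dotvDl !(dotvC z). Qed.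

Lemma dotvZl (s : R) a b : dotv (s *: a) b = s * dotv a b.
Proof. by rewrite /dotv mulr_sumr; apply: eq_bigr => i _; rewrite !mxE mulrA. Qed.

Lemma dotvZr (s : R) a b : dotv a (s *: b) = s * dotv a b.
Proof. by rewrite dotvC dotvZl dotvC. Qed.

Lemma dotvv_ge0 a : 0 <= dotv a a.
Proof. by apply: sumr_ge0 => i _; rewrite -expr2 sqr_ge0. Qed.

Lemma norm2_ge0 a : 0 <= norm2 a.
Proof. exact: sqrtr_ge0. Qed.

Lemma norm2_sqr a : norm2 a ^+ 2 = dotv a a.
Proof. by rewrite /norm2 sqr_sqrtr // dotvv_ge0. Qed.

Lemma dotv_young {s : R} a b : 0 < s ->
  - (dotv a a / s + s * dotv b b) <= 2 * dotv a b.
Proof.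
move=> s_gt0; have expand_ge0 := dotvv_ge0 (a + s *: b).
rewrite dotvDl !dotvDr !dotvZl !dotvZr (dotvC b a) in expand_ge0.
rewrite -(ler_pM2r s_gt0) mulrDl mulNr mulrDl divfK ?gt_eqF //.
lra.
Qed.

Lemma dotv_mulmx_sqr_le A (kappa : R) z :
  (forall z, norm2 (A *m z) <= kappa * norm2 z) ->
  dotv (A *m z) (A *m z) <= kappa ^+ 2 * dotv z z.
Proof.
move=> A_bounded; rewrite -!norm2_sqr -exprMn !expr2.
by apply: ler_pM; rewrite ?norm2_ge0 ?A_bounded.
Qed.

Lemma dotv_mulmx_young {A} {kappa s : R} a b :
  (forall z, norm2 (A *m z) <= kappa * norm2 z) -> 0 < s ->
  - (dotv a a / s + s * kappa ^+ 2 * dotv b b) <= 2 * dotv a (A *m b).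
Proof.
move=> A_bounded s_gt0; have := dotv_young a (A *m b) s_gt0; apply: le_trans.
by rewrite lerN2 lerD2l -mulrA ler_pM2l // dotv_mulmx_sqr_le.
Qed.

Definition kappa_uv (kappa zeta : R) : R :=
  2 * (8 * kappa ^+ 2 / zeta + 1 + kappa ^+ 2) / zeta.

Lemma kappa_uv_gt0 (kappa zeta : R) : 0 < zeta -> 0 < kappa_uv kappa zeta.
Proof.
move=> zeta_gt0; apply: divr_gt0 => //; apply: mulr_gt0 => //.
have : 0 <= 8 * kappa ^+ 2 / zeta.
  by rewrite divr_ge0 ?(ltW zeta_gt0) // (mulr_ge0 _ (sqr_ge0 _)).
have := sqr_ge0 kappa; lra.
Qed.

Lemma dotv_mulmx_lower_bound {A} {kappa zeta : R} u v :
  0 < kappa -> 0 < zeta ->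
  (forall z, norm2 (A *m z) <= kappa * norm2 z) ->
  zeta * dotv u u <= dotv u (A *m u) ->
  kappa_uv kappa zeta * dotv v v <= dotv u u ->
  zeta / 2 * dotv u u <= dotv (u + v) (A *m (u + v)).
Proof.
move=> kappa_gt0 zeta_gt0 A_bounded coercive_u dominant_u.
have zeta_neq0 : zeta != 0 by rewrite gt_eqF.
have kappa_neq0 : kappa != 0 by rewrite gt_eqF.
set C := 4 * kappa ^+ 2 / zeta.
have uAv : - (zeta / 4 * dotv u u + C * dotv v v) <= 2 * dotv u (A *m v).
  have s_gt0 : 0 < 4 / zeta by rewrite divr_gt0.
  have Nu_eq : dotv u u / (4 / zeta) = zeta / 4 * dotv u u by field.
  have C_eq : 4 / zeta * kappa ^+ 2 = C by rewrite /C; field.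
  by have := dotv_mulmx_young u v A_bounded s_gt0; rewrite Nu_eq C_eq.
have vAu : - (C * dotv v v + zeta / 4 * dotv u u) <= 2 * dotv v (A *m u).
  have s_gt0 : 0 < zeta / (4 * kappa ^+ 2) by rewrite divr_gt0 ?mulr_gt0.
  have Nv_eq : dotv v v / (zeta / (4 * kappa ^+ 2)) = C * dotv v v.
    by rewrite /C; field; apply/andP.
  have s_eq : zeta / (4 * kappa ^+ 2) * kappa ^+ 2 = zeta / 4 by field.
  by have := dotv_mulmx_young v u A_bounded s_gt0; rewrite Nv_eq s_eq.
have vAv := dotv_mulmx_young v v A_bounded ltr01.
rewrite mul1r divr1 in vAv.
have {}dominant_u : (2 * C + 1 + kappa ^+ 2) * dotv v v <= zeta / 2 * dotv u u.
  have kappa_uv_eq : zeta / 2 * (kappa_uv kappa zeta * dotv v v) =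
                     (2 * C + 1 + kappa ^+ 2) * dotv v v.
    by rewrite /kappa_uv /C; field.
  by rewrite -(ler_pM2l (_ : 0 < zeta / 2)) ?divr_gt0 // kappa_uv_eq in dominant_u.
rewrite mulmxDr !dotvDl !dotvDr; clearbody C; lra.
Qed.

End QuadraticForms.

Theorem lemma2p10 (R : realType) (n m : nat) (X : set 'cV[R]_n)
  (f : 'cV[R]_n -> R) (c : 'cV[R]_n -> 'cV[R]_m) (g : 'cV[R]_n -> 'cV[R]_n)
  (J : 'cV[R]_n -> 'M[R]_(m, n)) (x d : nat -> 'cV[R]_n) (y : nat -> 'cV[R]_m)
  (H : nat -> 'M[R]_n) (tau alpha : nat -> R) (kappaH zeta : R) :
  standing_assumption X f c g J x ->
  matrix_assumption J x H kappaH zeta ->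
  generated_by_alg1 X f c g J x d y H tau alpha \/
  generated_by_alg2 X f c g J x d y H tau alpha ->
  no_finite_termination c g J x y ->
  exists kuv : R, 0 < kuv /\
    forall (k : nat) (u v : 'cV[R]_n),
      J (x k) *m u = 0 ->
      (exists w : 'cV[R]_m, v = (J (x k))^T *m w) ->
      d k = u + v ->
      kuv * norm2 v ^+ 2 <= norm2 u ^+ 2 ->
      4^-1 * zeta * norm2 u ^+ 2 <= 2^-1 * dotv (d k) (H k *m d k).
Proof.
move=> _ [kappaH_gt0 zeta_gt0 matrix_bounds] _ _.
exists (kappa_uv kappaH zeta); split; first exact: kappa_uv_gt0.
move=> k u v Ju0 _ ->; have [_ H_bounded H_coercive] := matrix_bounds k.
rewrite !norm2_sqr => dominant_u.
have coercive_u := H_coercive u Ju0; rewrite norm2_sqr in coercive_u.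
have := dotv_mulmx_lower_bound u v kappaH_gt0 zeta_gt0 H_bounded coercive_u
  dominant_u.
lra.
Qed.
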